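(* Let $\mathsf E$ be a non-trivial observable on $\mathcal H_S$. No $\mathsf E$-instrument implemented by a measurement scheme constrained by the third law is repeatable.
   Context: All Hilbert spaces are finite-dimensional and complex. A state is a positive operator of unit trace; it is full-rank if it is positive definite. A channel is a completely positive trace-preserving linear map. A channel is constrained by the third law if it maps every full-rank state on its input space to a full-rank state on its output space. Let $2\le\dim\mathcal H_S<\infty$. An observable is a finite family $\mathsf E=\{\mathsf E_x\}_{x\in\mathcal X}$ of nonzero operators with $0\le\mathsf E_x\le\mathbb 1$ and $\sum_x\mathsf E_x=\mathbb 1$. It is non-trivial if some $\mathsf E_x$ is not a multiple of $\mathbb 1$. An $\mathsf E$-instrument is a family $\{\mathcal I_x\}_{x\in\mathcal X}$ of completely positive maps on $\mathcal L(\mathcal H_S)$ with $\mathrm{tr}[\mathcal I_x(\rho)]=\mathrm{tr}[\mathsf E_x\rho]$ for all $x$ and all states $\rho$. A measurement scheme $(\mathcal H_A,\xi,\mathcal E,\mathsf Z)$ consists of: - a finite-dimensional $\mathcal H_A$; - a state $\xi$ on $\mathcal H_A$; - a channel $\mathcal E$ on $\mathcal L(\mathcal H_S\otimes\mathcal H_A)$; - positive operators $\{\mathsf Z_x\}_{x\in\mathcal X}$ on $\mathcal H_A$ summing to $\mathbb 1$. It implements $\mathcal I_x(\rho)=\mathrm{tr}_A[(\mathbb 1\otimes\mathsf Z_x)\mathcal E(\rho\otimes\xi)]$. It is constrained by the third law if $\xi$ is full-rank and $\mathcal E$ is constrained by the third law. An $\mathsf E$-instrument is repeatable if $\mathrm{tr}[\mathsf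 E_y\mathcal I_x(\rho)]=\delta_{x,y}\mathrm{tr}[\mathsf E_x\rho]$ for all outcomes $x,y$ and all states $\rho$. *)

(* Complex scalars: an arbitrary numClosedFieldType C
   (e.g. algC, or R[i] for R : rcfType / realType). *)
From HB Require Import structures.
From mathcomp Require Import all_boot all_order all_algebra.
From mathcomp Require Export mxtens.
Set Implicit Arguments. Unset Strict Implicit. Unset Printing Implicit Defensive.
Import Order.TTheory GRing.Theory Num.Theory.
Local Open Scope ring_scope.

Section QDefs.
Variable C : numClosedFieldType.

Definition qform (n : nat) (A : 'M[C]_n) (v : 'cV[C]_n) : C :=
  ((map_mx Num.conj v^T) *m A *m v) 0 0.

Definition psd (n : nat) (A : 'M[C]_n) : Prop := forall v, 0 <= qform A v.

Definition pd (n : nat) (A : 'M[C]_n) : Prop :=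
  forall v, v != 0 -> 0 < qform A v.

Definition is_state (n : nat) (rho : 'M[C]_n) : Prop := psd rho /\ \tr rho = 1.

Definition full_rank_state (n : nat) (rho : 'M[C]_n) : Prop :=
  is_state rho /\ pd rho.

(* Kronecker/tensor index conventions come from mxtens:
   H_1 (x) H_2 = C^(n1 * n2), with index (i,j) |-> i * n2 + j. *)

(* ampliation id_k (x) Phi *)
Definition ampl (k n p : nat) (Phi : 'M[C]_n -> 'M[C]_p) (Y : 'M[C]_(k * n))
  : 'M[C]_(k * p) :=
  \matrix_(i, j)
    Phi (\matrix_(a, b) Y (mxtens_index ((mxtens_unindex i).1, a))
                          (mxtens_index ((mxtens_unindex j).1, b)))
        (mxtens_unindex i).2 (mxtens_unindex j).2.

Definition completely_positive (n p : nat) (Phi : 'M[C]_n -> 'M[C]_p) : Prop :=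
  forall (k : nat) (Y : 'M[C]_(k * n)), psd Y -> psd (ampl Phi Y).

Definition trace_preserving (n p : nat) (Phi : 'M[C]_n -> 'M[C]_p) : Prop :=
  forall Y, \tr (Phi Y) = \tr Y.

(* channel: completely positive trace-preserving linear map
   (linearity is carried by the {linear _ -> _} type at use sites) *)
Definition is_channel (n p : nat) (Phi : 'M[C]_n -> 'M[C]_p) : Prop :=
  completely_positive Phi /\ trace_preserving Phi.

Definition third_law_channel (n p : nat) (Phi : 'M[C]_n -> 'M[C]_p) : Prop :=
  is_channel Phi /\ forall rho, full_rank_state rho -> full_rank_state (Phi rho).

Definition observable (n : nat) (X : finType) (E : X -> 'M[C]_n) : Prop :=
  (forall x, E x != 0 /\ psd (E x) /\ psd (1%:M - E x)) /\ \sum_x E x = 1%:M.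

Definition nontrivial_obs (n : nat) (X : finType) (E : X -> 'M[C]_n) : Prop :=
  exists x, forall c : C, E x != c%:M.

Definition instrument (n : nat) (X : finType) (E : X -> 'M[C]_n)
  (I : X -> 'M[C]_n -> 'M[C]_n) : Prop :=
  forall x, completely_positive (I x) /\
    forall rho, is_state rho -> \tr (I x rho) = \tr (E x *m rho).

(* partial trace over the second (apparatus) factor *)
Definition ptrA (n m : nat) (Y : 'M[C]_(n * m)) : 'M[C]_n :=
  \matrix_(i, j) \sum_(a < m) Y (mxtens_index (i, a)) (mxtens_index (j, a)).

Definition meas_scheme (n m : nat) (X : finType) (xi : 'M[C]_m)
  (Ech : 'M[C]_(n * m) -> 'M[C]_(n * m)) (Z : X -> 'M[C]_m) : Prop :=
  is_state xi /\ is_channel Ech /\ (forall x, psd (Z x)) /\ \sum_x Z x = 1%:M.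

Definition scheme_third_law (n m : nat) (xi : 'M[C]_m)
  (Ech : 'M[C]_(n * m) -> 'M[C]_(n * m)) : Prop :=
  full_rank_state xi /\ third_law_channel Ech.

Definition implements (n m : nat) (X : finType) (I : X -> 'M[C]_n -> 'M[C]_n)
  (xi : 'M[C]_m) (Ech : 'M[C]_(n * m) -> 'M[C]_(n * m)) (Z : X -> 'M[C]_m) : Prop :=
  forall x rho, is_state rho ->
    I x rho = ptrA ((1%:M *t Z x) *m Ech (rho *t xi)).

Definition repeatable (n : nat) (X : finType) (E : X -> 'M[C]_n)
  (I : X -> 'M[C]_n -> 'M[C]_n) : Prop :=
  forall x y rho, is_state rho ->
    \tr (E y *m I x rho) = (x == y)%:R * \tr (E x *m rho).

End QDefs.

(* Feed the scheme the full-rank product state rho (x) xi with rho = 1/n.  By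
   the third law S := Ech (rho (x) xi) is positive definite.  Pick an outcome x
   with Z x <> 0 and, E being non-trivial, another outcome y.  Then
   tr (E y I_x(rho)) = tr ((E y (x) Z x) S), and writing the nonzero positive
   operator E y (x) Z x as K^* K, this trace is the sum of <k, S k> over the
   columns k of K^*, hence strictly positive, whereas repeatability forces it to
   vanish. *)

From HB Require Import structures.
From mathcomp Require Import all_boot all_order all_algebra.
From mathcomp Require Import mxtens sesquilinear spectral ring.
Import Order.TTheory GRing.Theory Num.Theory.
Set Implicit Arguments. Unset Strict Implicit. Unset Printing Implicit Defensive.
Local Open Scope ring_scope.
Local Open Scope sesquilinear_scope.

Section PositiveMatrices.
Variable C : numClosedFieldType.

Lemma trmxC_mul m n p (A : 'M[C]_(m, n)) (B : 'M[C]_(n, p)) :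
  (A *m B)^t* = B^t* *m A^t*.
Proof. by rewrite trmx_mul map_mxM. Qed.

Definition sesqform N (A : 'M[C]_N) (u v : 'cV[C]_N) : C := (u^t* *m A *m v) 0 0.

Lemma sesqform_delta N (A : 'M[C]_N) i j :
  sesqform A (delta_mx i 0) (delta_mx j 0) = A i j.
Proof.
rewrite /sesqform trmx_delta map_delta_mx.
by rewrite -rowE -colE !mxE.
Qed.

Lemma qformDZ N (A : 'M[C]_N) u v c :
  qform A (u + c *: v) =
  qform A u + c * sesqform A u v + c^* * sesqform A v u + c^* * c * qform A v.
Proof.
rewrite /qform /sesqform.
have -> : (u + c *: v)^t* = u^t* + c^* *: v^t*.
  by apply/matrixP => a b; rewrite !mxE rmorphD rmorphM.
rewrite !(mulmxDl, mulmxDr) -!scalemxAl -!scalemxAr !mxE.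
by ring.
Qed.

Lemma qform_trmxC N (A : 'M[C]_N) v : qform (A^t*) v = (qform A v)^*.
Proof.
rewrite /qform.
have -> : v^t* *m A^t* *m v = (v^t* *m A *m v)^t*.
  by rewrite !trmxC_mul trmxCK mulmxA.
by rewrite !mxE.
Qed.

Lemma qform_eq0 N (A : 'M[C]_N) : (forall v, qform A v = 0) -> A = 0.
Proof.
move=> A0; apply/matrixP => i j; rewrite mxE -sesqform_delta.
set u := delta_mx i 0; set v := delta_mx j 0.
have := qformDZ A u v 1; have := qformDZ A u v 'i.
rewrite !A0 conjCi rmorph1 !mul1r !mulr0 !add0r !addr0 => hi h1.
have sqi : 'i * 'i = -1 :> C by rewrite -expr2 sqrCi.
apply: (@mulfI _ 2); first by rewrite pnatr_eq0.
rewrite mulr0.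
have -> : 2 * sesqform A u v =
  (sesqform A u v + sesqform A v u) - 'i * ('i * sesqform A u v + - 'i * sesqform A v u).
  by ring: sqi.
by rewrite -h1 -hi mulr0 subr0.
Qed.

Lemma psd_hermitian N (A : 'M[C]_N) : psd A -> A^t* = A.
Proof.
move=> psdA; apply/eqP; rewrite -subr_eq0; apply/eqP/qform_eq0 => v.
have -> : qform (A^t* - A) v = qform (A^t*) v - qform A v.
  by rewrite /qform mulmxBr mulmxBl !mxE.
by rewrite qform_trmxC conj_Creal ?subrr ?ger0_real.
Qed.

Lemma psd_gram N (A : 'M[C]_N) : psd A -> exists B : 'M[C]_N, A = B^t* *m B.
Proof.
move=> psdA.
have /orthomx_spectralP A_spectral : A \is normalmx.
  by apply/normalmxP; rewrite psd_hermitian.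
set P := spectralmx A in A_spectral; set d := spectral_diag A in A_spectral.
have P_unitary : P \is unitarymx := spectral_unitarymx A.
rewrite invmx_unitary // in A_spectral.
have d_ge0 k : 0 <= d 0 k.
  have := psdA (P^t* *m delta_mx k 0).
  rewrite /qform trmxC_mul trmxCK {1}A_spectral !mulmxA.
  rewrite -(mulmxA _ P) (unitarymxP P_unitary) mulmx1.
  rewrite -(mulmxA _ P) (unitarymxP P_unitary) mulmx1.
  by rewrite -/(sesqform _ _ _) sesqform_delta mxE eqxx mulr1n.
pose sqrt_d := diag_mx (map_mx sqrtC d).
have sqrt_dK : sqrt_d^t* *m sqrt_d = diag_mx d.
  apply/matrixP => i j; rewrite tr_diag_mx map_diag_mx mul_diag_mx !mxE.
  have [->|ij] := eqVneq i j; last by rewrite !mulr0n mulr0.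
  by rewrite !mulr1n /= conj_Creal ?ger0_real ?sqrtC_ge0 // -expr2 sqrtCK.
exists (sqrt_d *m P).
by rewrite trmxC_mul -mulmxA (mulmxA (sqrt_d^t*)) sqrt_dK mulmxA.
Qed.

Lemma pd_psd N (A : 'M[C]_N) : pd A -> psd A.
Proof.
move=> pdA v; have [->|v_neq0] := eqVneq v 0; last exact/ltW/pdA.
by rewrite /qform mulmx0 mxE.
Qed.

Lemma qform_sum N (A : 'M[C]_N) v :
  qform A v = \sum_k \sum_l (v k 0)^* * A k l * v l 0.
Proof.
rewrite /qform mxE exchange_big /=; apply: eq_bigr => k _.
by rewrite mxE mulr_suml; apply: eq_bigr => l _; rewrite !mxE.
Qed.

Lemma psd_scalar N (c : C) : 0 <= c -> psd (c%:M : 'M_N).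
Proof.
move=> c_ge0 v; rewrite /qform mul_mx_scalar -scalemxAl mxE.
apply: mulr_ge0 => //; rewrite mxE; apply: sumr_ge0 => k _.
by rewrite !mxE mulrC mul_conjC_ge0.
Qed.

Lemma gram_diag_qform p N (K : 'M[C]_(p, N)) (S : 'M[C]_N) r :
  (K *m S *m K^t*) r r = qform S ((row r K)^t*).
Proof.
rewrite /qform trmxCK -row_mul !mxE; apply: eq_bigr => k _.
by rewrite !mxE.
Qed.

Lemma mxtrace_gram_pd_gt0 p N (K : 'M[C]_(p, N)) (S : 'M[C]_N) :
  pd S -> K != 0 -> 0 < \tr (K^t* *m K *m S).
Proof.
move=> pdS /matrix0Pn[r [c Krc]].
rewrite -mulmxA mxtrace_mulC /mxtrace (bigD1 r) //=.
apply: ltr_wpDr; first by apply: sumr_ge0 => i _; rewrite gram_diag_qform pd_psd.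
rewrite gram_diag_qform; apply: pdS; apply/cV0Pn; exists c.
by rewrite !mxE conjC_eq0.
Qed.

End PositiveMatrices.

Section Tensors.
Variable C : numClosedFieldType.

Lemma big_mxtens n m (F : 'I_(n * m) -> C) :
  \sum_(k < n * m) F k = \sum_(i < n) \sum_(a < m) F (mxtens_index (i, a)).
Proof.
rewrite pair_big (reindex (@mxtens_index n m)) /=; last first.
  by exists (@mxtens_unindex n m) => k _; rewrite (mxtens_indexK, mxtens_unindexK).
by apply: eq_bigr => -[i a].
Qed.

Lemma mxtrace_tens n m (A : 'M[C]_n) (B : 'M[C]_m) : \tr (A *t B) = \tr A * \tr B.
Proof. by rewrite /mxtrace mulr_sum; apply: eq_bigr => k _; rewrite mxE. Qed.

Lemma trmxC_tens m n p q (A : 'M[C]_(m, n)) (B : 'M[C]_(p, q)) :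
  (A *t B)^t* = A^t* *t B^t*.
Proof. by rewrite trmx_tens map_mxT. Qed.

Lemma tensmx_neq0 m n p q (A : 'M[C]_(m, n)) (B : 'M[C]_(p, q)) :
  A != 0 -> B != 0 -> A *t B != 0.
Proof.
move=> /matrix0Pn[i [j Aij]] /matrix0Pn[k [l Bkl]]; apply/matrix0Pn.
by exists (mxtens_index (i, k)), (mxtens_index (j, l)); rewrite tensmxE mulf_neq0.
Qed.

Lemma mxtrace_mul_ptrA n m (A : 'M[C]_n) (M : 'M[C]_(n * m)) :
  \tr (A *m ptrA M) = \tr ((A *t 1%:M) *m M).
Proof.
rewrite /mxtrace big_mxtens; apply: eq_bigr => i _.
rewrite mxE; under eq_bigr => j _ do rewrite mxE mulr_sumr.
rewrite exchange_big /=; apply: eq_bigr => a _.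
rewrite mxE big_mxtens; apply: eq_bigr => j _.
rewrite (bigD1 a) //= big1 ?addr0 => [|b /negbTE ba].
  by rewrite tensmxE mxE eqxx mulr1.
by rewrite tensmxE mxE eq_sym ba mulr0 mul0r.
Qed.

Lemma qform_scalar_tens n m (c : C) (B : 'M[C]_m) (v : 'cV[C]_(n * m)) :
  qform ((c%:M : 'M_n) *t B) v =
  c * \sum_i qform B (\col_a v (mxtens_index (i, a)) 0).
Proof.
rewrite qform_sum big_mxtens mulr_sumr; apply: eq_bigr => i _.
rewrite qform_sum mulr_sumr; apply: eq_bigr => a _.
rewrite big_mxtens (bigD1 i) //= [X in _ + X]big1 ?addr0 => [|j /negbTE ji].
  rewrite mulr_sumr; apply: eq_bigr => b _.
  by rewrite tensmxE !mxE eqxx mulr1n; ring.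
by rewrite big1 // => b _; rewrite tensmxE mxE eq_sym ji mulr0n mul0r mulr0 mul0r.
Qed.

Lemma pd_scalar_tens n m (c : C) (B : 'M[C]_m) :
  0 < c -> pd B -> pd ((c%:M : 'M_n) *t B).
Proof.
move=> c_gt0 pdB v /cV0Pn[k vk]; rewrite qform_scalar_tens.
case: (mxtens_indexP k) vk => i a vk.
apply: mulr_gt0 => //; rewrite (bigD1 i) //=.
apply: ltr_wpDr; first by apply: sumr_ge0 => j _; apply: pd_psd.
by apply: pdB; apply/cV0Pn; exists a; rewrite mxE.
Qed.

Lemma mxtrace_psd_tens_pd_gt0 n m (P : 'M[C]_n) (Q : 'M[C]_m) S :
  psd P -> psd Q -> P != 0 -> Q != 0 -> pd S -> 0 < \tr ((P *t Q) *m S).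
Proof.
move=> /psd_gram[B ->] /psd_gram[G ->] BB_neq0 GG_neq0 pdS.
have B_neq0 : B != 0 by apply: contraNneq BB_neq0 => ->; rewrite mulmx0.
have G_neq0 : G != 0 by apply: contraNneq GG_neq0 => ->; rewrite mulmx0.
rewrite -tensmx_mul -trmxC_tens.
exact: mxtrace_gram_pd_gt0 (tensmx_neq0 B_neq0 G_neq0).
Qed.

End Tensors.

Section ThirdLaw.
Variable C : numClosedFieldType.

Definition maximally_mixed n : 'M[C]_n := (n%:R^-1)%:M.

Lemma maximally_mixed_state n : (0 < n)%N -> is_state (maximally_mixed n).
Proof.
move=> n_gt0; split; first by apply/psd_scalar; rewrite invr_ge0 ler0n.
by rewrite mxtrace_scalar -[_ *+ n]mulr_natr mulVf // pnatr_eq0 -lt0n.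
Qed.

Lemma full_rank_maximally_mixed_tens n m (xi : 'M[C]_m) :
  (0 < n)%N -> full_rank_state xi ->
  full_rank_state (maximally_mixed n *t xi).
Proof.
move=> n_gt0 [[_ tr_xi] pd_xi].
have pd_tens : pd (maximally_mixed n *t xi).
  by apply: pd_scalar_tens; rewrite // invr_gt0 ltr0n.
split=> //; split; first exact: pd_psd.
by rewrite mxtrace_tens (maximally_mixed_state n_gt0).2 tr_xi mulr1.
Qed.

Lemma nontrivial_obs_other_outcome n (X : finType) (E : X -> 'M[C]_n) :
  observable E -> nontrivial_obs E -> forall x, exists y : X, y != x.
Proof.
move=> [_ sumE] [x0 E_x0] x.
have [y /= yx|only_x] := pickP (predC1 x); first by exists y.
have {}only_x y : y = x by apply/eqP/negbFE/only_x.
rewrite (big_pred1 x) in sumE; last by move=> y; rewrite /= (only_x y) eqxx.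
by move: (E_x0 1); rewrite (only_x x0) sumE eqxx.
Qed.

Lemma pointer_effect_neq0 m (X : finType) (xi : 'M[C]_m) (Z : X -> 'M[C]_m) :
  is_state xi -> \sum_x Z x = 1%:M -> exists x, Z x != 0.
Proof.
move=> [_ tr_xi] sumZ.
have [x /= Zx|Z0] := pickP (fun x => Z x != 0); first by exists x.
have : \tr xi = 0.
  by rewrite -[xi]mul1mx -sumZ big1 ?mul0mx ?mxtrace0 // => x _; apply/eqP/negbFE/Z0.
by rewrite tr_xi => /eqP; rewrite oner_eq0.
Qed.

End ThirdLaw.

Theorem theorem3 (C : numClosedFieldType) (n : nat) (X : finType)
  (E : X -> 'M[C]_n) :
  (2 <= n)%N -> observable E -> nontrivial_obs E ->
  forall (I : X -> {linear 'M[C]_n -> 'M[C]_n}),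
  instrument E (fun x => I x) ->
  forall (m : nat) (xi : 'M[C]_m) (Ech : {linear 'M[C]_(n * m) -> 'M[C]_(n * m)})
         (Z : X -> 'M[C]_m),
  meas_scheme xi Ech Z -> scheme_third_law xi Ech ->
  implements (fun x => I x) xi Ech Z ->
  ~ repeatable E (fun x => I x).
Proof.
move=> n_ge2 obsE nontrivE I _ m xi Ech Z [xi_state [_ [Z_psd sumZ]]]
  [xi_full [_ Ech_full]] implI rep.
have n_gt0 : (0 < n)%N by apply: leq_trans n_ge2.
have [x Zx_neq0] := pointer_effect_neq0 xi_state sumZ.
have [y yx] := nontrivial_obs_other_outcome obsE nontrivE x.
have [_ pdS] := Ech_full _ (full_rank_maximally_mixed_tens n_gt0 xi_full).
have [Ey_neq0 [Ey_psd _]] := obsE.1 y.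
have rho_state := maximally_mixed_state C n_gt0.
have := rep x y _ rho_state.
rewrite eq_sym (negbTE yx) mul0r implI //.
rewrite mxtrace_mul_ptrA mulmxA tensmx_mul mulmx1 mul1mx.
by apply/eqP/lt0r_neq0/mxtrace_psd_tens_pd_gt0.
Qed.
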